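(* Let $n\ge 1$ and let $\mathbb{P}$ be a set of distinct unique configurations of length $n$. Then $K(n)=\Omega(\log|\mathbb{P}|)$; more precisely $K(n)\ge\lceil\log_3|\mathbb{P}|\rceil$.
   Context: For a real sequence $A=(a_1,\dots,a_n)$, a configuration is a sequence $P=(p_1,\dots,p_n)$ with $p_\ell\in\{1,\dots,n-\ell+1\}$ for each $\ell$; $P$ is an output configuration for $A$ if for every $\ell=1,\dots,n$ the sum $a_{p_\ell}+\dots+a_{p_\ell+\ell-1}$ is maximum among all sums of $\ell$ consecutive entries of $A$. Let $\mathcal{P}(A)$ be the set of output configurations of $A$. A configuration $P$ is unique if there exists $A\in\mathbb{R}^n$ with $\mathcal{P}(A)=\{P\}$. The MCSP (in this form) asks, given $A$, to output some output configuration for $A$. A decision tree algorithm for inputs of length $n$ is a ternary tree: each internal node holds a test ''$f(A)<0$, $=0$, or $>0$?'' for some rational function $f$ of the $n$ inputs, with one branch per outcome; each leaf holds functions $g_1,\dots,g_n$ and outputs $P=(g_1(A),\dots,g_n(A))$. The tree solves MCSP if for every input $A$ the output at the reached leaf is an output configuration for $A$. Its cost is its height, and $K(n)$ is the minimum cost of a decision tree solving MCSP for inputs of length $n$. *)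

From HB Require Import structures.
From mathcomp Require Import all_boot all_order all_algebra.
From mathcomp Require Import reals.
From mathcomp Require Import mpoly.

Set Implicit Arguments.
Unset Strict Implicit.
Unset Printing Implicit Defensive.

Import Order.TTheory GRing.Theory Num.Theory.
Local Open Scope ring_scope.

Section MCSP.
Variables (R : realType) (n : nat).

(* Input sequence A = (a_1,...,a_n), stored 0-based: A i = a_{i+1}. *)
Definition input := 'I_n -> R.

(* Sum of the l consecutive entries starting at 0-based position s,
   i.e. a_{s+1} + ... + a_{s+l}. *)
Definition segsum (A : input) (s l : nat) : R :=
  \sum_(j < n | (s <= j < s + l)%N) A j.

(* A configuration P = (p_1,...,p_n) is stored as a finite function on
   'I_n with P i = p_{i+1} (1-based values).  p_l ranges over {1..n-l+1}. *)
Definition config := {ffun 'I_n -> nat}.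

Definition is_config (P : config) : Prop :=
  forall i : 'I_n, (1 <= P i <= n - i)%N.

Definition output_config (A : input) (P : config) : Prop :=
  is_config P /\
  forall (i : 'I_n) (s : nat), (s + i.+1 <= n)%N ->
    segsum A s i.+1 <= segsum A (P i).-1 i.+1.

Definition unique_config (P : config) : Prop :=
  exists A : input, forall Q : config, output_config A Q <-> Q = P.

(* A rational function in n variables with real coefficients, given as a
   numerator/denominator pair of polynomials; it is evaluated with the
   total MathComp division (x / 0 = 0). *)
Definition ratfun := ({mpoly R[n]} * {mpoly R[n]})%type.

Definition rf_eval (f : ratfun) (A : input) : R := f.1.@[A] / f.2.@[A].

Inductive dtree :=
| DLeaf of ('I_n -> ratfun)
| DNode of ratfun & dtree & dtree & dtree. (* branches: < 0, = 0, > 0 *)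

Fixpoint height (T : dtree) : nat :=
  match T with
  | DLeaf _ => 0
  | DNode _ t1 t2 t3 => (maxn (height t1) (maxn (height t2) (height t3))).+1
  end.

Fixpoint reach (T : dtree) (A : input) : 'I_n -> ratfun :=
  match T with
  | DLeaf g => g
  | DNode f tlt teq tgt =>
      let v := rf_eval f A in
      if v < 0 then reach tlt A else if v == 0 then reach teq A
      else reach tgt A
  end.

Definition solves_MCSP (T : dtree) : Prop :=
  forall A : input, exists P : config,
    output_config A P /\
    forall i : 'I_n, rf_eval (reach T A i) A = (P i)%:R.

End MCSP.

From mathcomp Require Import all_boot all_order all_algebra.
From mathcomp Require Import reals.
From mathcomp Require Import mpoly.
From mathcomp Require Import polyrcf.
From mathcomp Require Import zify ring.
From Stdlib Require Import Classical ClassicalEpsilon.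

(* A unique configuration P has a witness input at which, for every length,
   the segment starting at p_l is the strict maximiser; this property is
   preserved on a small initial piece of every line through the witness, so
   the witness can be perturbed to a generic point, where every test
   polynomial of the tree either vanishes identically or is nonzero. At a
   generic point the path through the tree is constant near it on every line.
   If the generic witnesses of P and Q followed the same path, the leaf
   function g_l would equal p_l on a small piece of the line joining them,
   hence (being rational) p_l times its denominator would equal its numerator
   on the whole line; evaluating at the witness of Q gives q_l = p_l. So
   distinct unique configurations follow distinct paths, of which a ternary
   tree of height h has at most 3^h. *)

Set Implicit Arguments.
Unset Strict Implicit.
Unset Printing Implicit Defensive.

Import Order.TTheory GRing.Theory Num.Theory Num.Def.
Local Open Scope ring_scope.

Section NearZeroRight.
Variable R : rcfType.
Implicit Types (P Q : R -> Prop) (q : {poly R}).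

Definition near0p P := exists2 e : R, 0 < e & forall t, 0 < t < e -> P t.

Lemma near0pT P : (forall t, P t) -> near0p P.
Proof. by move=> HP; exists 1. Qed.

Lemma near0pS P Q : (forall t, P t -> Q t) -> near0p P -> near0p Q.
Proof. by move=> PQ [e e0 HP]; exists e => // t /HP/PQ. Qed.

Lemma near0pI P Q : near0p P -> near0p Q -> near0p (fun t => P t /\ Q t).
Proof.
move=> [e1 e10 HP] [e2 e20 HQ]; exists (Num.min e1 e2); first by rewrite lt_min e10.
move=> t /andP[t0]; rewrite lt_min => /andP[te1 te2].
by split; [apply: HP | apply: HQ]; rewrite t0.
Qed.

Lemma near0p_ex P : near0p P -> exists t, P t.
Proof.
move=> [e e0 HP]; exists (e / 2%:R); apply: HP.
by rewrite divr_gt0 //= ltr_pdivrMr // ltr_pMr // ltr1n.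
Qed.

Lemma near0p_all_seq (T : eqType) (s : seq T) (P : T -> R -> Prop) :
  (forall x, x \in s -> near0p (P x)) ->
  near0p (fun t => forall x, x \in s -> P x t).
Proof.
elim: s => [|a s IHs] Hs; first by apply: near0pT => t x; rewrite in_nil.
have Ha := Hs a (mem_head a s).
have {IHs}Hs' := IHs (fun x xs => Hs x (@mem_behead _ (a :: s) x xs)).
apply: near0pS (near0pI Ha Hs') => t [Pa Ps] x.
by rewrite in_cons => /predU1P[->|/Ps].
Qed.

Lemma near0p_all (T : finType) (P : T -> R -> Prop) :
  (forall x, near0p (P x)) -> near0p (fun t => forall x, P x t).
Proof.
move=> HP; apply: near0pS (@near0p_all_seq T (enum T) P (fun x _ => HP x)) => t Pt x.
by apply: Pt; rewrite mem_enum.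
Qed.

Lemma near0p_poly_neq0 q : q != 0 -> near0p (fun t => q.[t] != 0).
Proof.
move=> q0; exists (next_root q 0 1); first exact: next_root_gt.
move=> t t01; have := @neighpr_root R q 0 1 t.
by rewrite /neighpr in_itv /= t01 => /(_ isT); rewrite rootE.
Qed.

Lemma near0p_poly_sgr q : q.[0] != 0 -> near0p (fun t => sgr q.[t] = sgr q.[0]).
Proof.
move=> q0; have qn0 : q != 0 by apply: contraNneq q0 => ->; rewrite horner0.
exists (next_root q 0 1); first exact: next_root_gt.
by move=> t t01; apply: (@sgr_neighprN R q 0 1).
Qed.

Lemma near0p_lt_line (a b c d : R) : a < b -> near0p (fun t => a + t * c < b + t * d).
Proof.
rewrite -subr_gt0 => ba; have : ((b - a)%:P + (d - c)%:P * 'X).[0] != 0.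
  by rewrite !hornerE gt_eqF.
move/near0p_poly_sgr; apply: near0pS => t.
rewrite !hornerE (gtr0_sg ba) => /eqP; rewrite sgr_cp0 -[_ < b + _]subr_gt0.
by rewrite (_ : b + t * d - (a + t * c) = b - a + (d - c) * t) //; ring.
Qed.

End NearZeroRight.

Section Line.
Variables (R : comNzRingType) (n : nat).
Implicit Types (A B w : 'I_n -> R) (p : {mpoly R[n]}).

Definition line A w (t : R) : 'I_n -> R := fun j => A j + t * w j.

Definition linepoly p A w : {poly R} :=
  mmap (@polyC R) (fun j => (A j)%:P + (w j)%:P * 'X) p.

Lemma linepolyE p A w t : (linepoly p A w).[t] = p.@[line A w t].
Proof.
rewrite mevalE /linepoly /mmap horner_sum; apply: eq_bigr => m _.
rewrite hornerM hornerC /mmap1 horner_prod; congr (_ * _); apply: eq_bigr => i _.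
by rewrite horner_exp !hornerE /line mulrC.
Qed.

Lemma line0 A w : line A w 0 =1 A.
Proof. by move=> j; rewrite /line mul0r addr0. Qed.

Lemma line1_sub A B : line A (fun j => B j - A j) 1 =1 B.
Proof. by move=> j; rewrite /line mul1r addrC subrK. Qed.

Lemma linepoly0E p A w : (linepoly p A w).[0] = p.@[A].
Proof. by rewrite linepolyE (meval_eq _ (line0 A w)). Qed.

End Line.

Section Generic.
Variables (R : rcfType) (n : nat).
Implicit Types (A B w : 'I_n -> R) (p : {mpoly R[n]}) (ps : seq {mpoly R[n]}).

Definition generic_at ps B :=
  forall p, p \in ps -> (forall y, p.@[y] = 0) \/ p.@[B] != 0.

Definition line_open (Pr : ('I_n -> R) -> Prop) :=
  forall B w, Pr B -> near0p (fun t => Pr (line B w t)).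

Lemma near0p_sgr_meval_line p B w :
  (forall y, p.@[y] = 0) \/ p.@[B] != 0 ->
  near0p (fun t => sgr p.@[line B w t] = sgr p.@[B]).
Proof.
case=> [p0|pB]; first by apply: near0pT => t; rewrite !p0.
have : (linepoly p B w).[0] != 0 by rewrite linepoly0E.
by move/near0p_poly_sgr; apply: near0pS => t; rewrite linepolyE linepoly0E.
Qed.

Lemma near0p_generic_line ps B w :
  generic_at ps B -> near0p (fun t => generic_at ps (line B w t)).
Proof.
move=> gB; apply: near0pS (near0p_all_seq (fun p pps =>
  near0p_sgr_meval_line w (gB p pps))) => t Ht p pps.
by case: (gB p pps) => [|pB]; [left | right; rewrite -sgr_eq0 Ht // sgr_eq0].
Qed.

Lemma exists_generic ps (Pr : ('I_n -> R) -> Prop) A :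
  line_open Pr -> Pr A -> exists B, Pr B /\ generic_at ps B.
Proof.
move=> Pr_open PA; elim: ps => [|q ps [B [PB gB]]].
  by exists A; split => // p; rewrite in_nil.
have [q0|] := classic (forall y, q.@[y] = 0).
  by exists B; split => // p; rewrite in_cons => /predU1P[->|/gB]; [left|].
move=> /not_all_ex_not[y /eqP qy].
pose w j := y j - B j.
have qw : linepoly q B w != 0.
  by apply: contraNneq qy => qw0; rewrite -(meval_eq _ (line1_sub B y)) -linepolyE qw0 horner0.
have [t [[qt gt] Pt]] := near0p_ex (near0pI (near0pI (near0p_poly_neq0 qw)
  (near0p_generic_line w gB)) (Pr_open B w PB)).
exists (line B w t); split => // p; rewrite in_cons => /predU1P[->|/gt //].
by right; rewrite -linepolyE.
Qed.

End Generic.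

Section DecisionTree.
Variables (R : realType) (n : nat).
Implicit Types (T : dtree R n) (A B : input R n).

Fixpoint tree_path T A : seq nat :=
  match T with
  | DLeaf _ => [::]
  | DNode f tlt teq tgt =>
      let v := rf_eval f A in
      if v < 0 then 0%N :: tree_path tlt A
      else if v == 0 then 1%N :: tree_path teq A
      else 2%N :: tree_path tgt A
  end.

Fixpoint tree_polys T : seq {mpoly R[n]} :=
  match T with
  | DLeaf _ => [::]
  | DNode f tlt teq tgt => [:: f.1, f.2 & tree_polys tlt ++ tree_polys teq ++ tree_polys tgt]
  end.

Lemma tree_path_reach T A B : tree_path T A = tree_path T B -> reach T A = reach T B.
Proof.
elim: T => [g|f tlt IHlt teq IHeq tgt IHgt] //=.
case: (rf_eval f A < 0); case: (rf_eval f B < 0);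
  case: (rf_eval f A == 0); case: (rf_eval f B == 0) => //= -[];
  by [apply: IHlt | apply: IHeq | apply: IHgt].
Qed.

Lemma tree_path_near_line T B w :
  generic_at (tree_polys T) B -> near0p (fun t => tree_path T (line B w t) = tree_path T B).
Proof.
elim: T => [g|f tlt IHlt teq IHeq tgt IHgt] gB /=; first exact: near0pT.
have gsub T' : {subset tree_polys T' <= tree_polys tlt ++ tree_polys teq ++ tree_polys tgt} ->
    generic_at (tree_polys T') B.
  by move=> sub p /sub pT; apply: gB; rewrite !inE pT !orbT.
have glt : generic_at (tree_polys tlt) B by apply: gsub => p pT; rewrite mem_cat pT.
have geq : generic_at (tree_polys teq) B by apply: gsub => p pT; rewrite !mem_cat pT orbT.
have ggt : generic_at (tree_polys tgt) B by apply: gsub => p pT; rewrite !mem_cat pT !orbT.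
have s1 := near0p_sgr_meval_line w (gB f.1 (mem_head _ _)).
have f2 : f.2 \in tree_polys (DNode f tlt teq tgt) by rewrite !inE eqxx orbT.
have s2 := near0p_sgr_meval_line w (gB f.2 f2).
apply: near0pS (near0pI (near0pI s1 s2)
  (near0pI (IHlt glt) (near0pI (IHeq geq) (IHgt ggt)))) => t [[e1 e2] [elt [eeq egt]]].
have ev : sgr (rf_eval f (line B w t)) = sgr (rf_eval f B).
  by rewrite /rf_eval !sgrM !sgrV e1 e2.
by rewrite -sgr_lt0 ev sgr_lt0 -sgr_eq0 ev sgr_eq0 elt eeq egt.
Qed.

Lemma size_leq_exp_height (X : eqType) T (S : seq X) (pt : X -> input R n) :
  uniq S -> {in S &, injective (fun x => tree_path T (pt x))} ->
  (size S <= 3 ^ height T)%N.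
Proof.
elim: T S => [g|f tlt IHlt teq IHeq tgt IHgt] S uS inj /=.
  rewrite -(size_map (fun x => tree_path (DLeaf g) (pt x))).
  apply: (@uniq_leq_size _ _ [:: [::]]); first by rewrite map_inj_in_uniq.
  by move=> p /mapP[x _ ->]; rewrite inE.
set h := maxn _ _.
have size_branch T' k (b : pred X) : (height T' <= h)%N ->
    (forall S', uniq S' -> {in S' &, injective (fun x => tree_path T' (pt x))} ->
      (size S' <= 3 ^ height T')%N) ->
    (forall x, b x -> tree_path (DNode f tlt teq tgt) (pt x) = k :: tree_path T' (pt x)) ->
    (count b S <= 3 ^ h)%N.
  move=> hT' IH path_b; rewrite -size_filter (leq_trans _ (leq_pexp2l _ hT')) //.
  apply: IH; first exact: filter_uniq.
  move=> x y; rewrite !mem_filter => /andP[bx xS] /andP[b_y yS] e.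
  by apply: inj => //; rewrite [LHS]path_b // [RHS]path_b // e.
pose neg x := (rf_eval f (pt x) < 0)%R.
pose zero x := (rf_eval f (pt x) == 0)%R.
rewrite (_ : size S = count neg S + count [pred x | ~~ neg x && zero x] S
    + count [pred x | ~~ neg x && ~~ zero x] S)%N; last first.
  by elim: (S) => //= x S' ->; case: (neg x); case: (zero x) => /=; lia.
have hlt : (height tlt <= h)%N by rewrite leq_maxl.
have heq : (height teq <= h)%N by rewrite (leq_trans _ (leq_maxr _ _)) ?leq_maxl.
have hgt : (height tgt <= h)%N by rewrite (leq_trans _ (leq_maxr _ _)) ?leq_maxr.
have c1 : (count neg S <= 3 ^ h)%N.
  by apply: (size_branch tlt 0%N) => // x; rewrite /neg /= => ->.
have c2 : (count [pred x | ~~ neg x && zero x] S <= 3 ^ h)%N.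
  by apply: (size_branch teq 1%N) => // x; rewrite /neg /zero /= => /andP[/negPf -> ->].
have c3 : (count [pred x | ~~ neg x && ~~ zero x] S <= 3 ^ h)%N.
  by apply: (size_branch tgt 2%N) => // x; rewrite /neg /zero /= => /andP[/negPf -> /negPf ->].
rewrite expnS; lia.
Qed.
End DecisionTree.

Section MaximumConsecutiveSums.
Variables (R : realType) (n : nat).
Implicit Types (A B w : input R n) (P Q : config n).

Definition strict_output P A :=
  forall (i : 'I_n) (s : nat), (s + i.+1 <= n)%N -> s != (P i).-1 ->
    segsum A s i.+1 < segsum A (P i).-1 i.+1.

Lemma config_gt0 P i : is_config P -> (0 < P i)%N.
Proof. by move=> cP; case/andP: (cP i). Qed.

Lemma segsum_line A w t s l :
  segsum (line A w t) s l = segsum A s l + t * segsum w s l.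
Proof. by rewrite /segsum mulr_sumr -big_split. Qed.

Lemma strict_output_line_open P : line_open (strict_output P).
Proof.
move=> A w sA.
have Hi (i : 'I_n) : near0p (fun t => forall s, s \in iota 0 n ->
    (s + i.+1 <= n)%N -> s != (P i).-1 ->
    segsum (line A w t) s i.+1 < segsum (line A w t) (P i).-1 i.+1).
  apply: near0p_all_seq => s _.
  have [/andP[sn sP]|not_s] := boolP ((s + i.+1 <= n)%N && (s != (P i).-1)); last first.
    by apply: near0pT => t sn sP; move: not_s; rewrite sn sP.
  have := near0p_lt_line (segsum w s i.+1) (segsum w (P i).-1 i.+1) (sA i s sn sP).
  by apply: near0pS => t; rewrite !segsum_line.
apply: near0pS (near0p_all Hi) => t Ht i s sn sP; apply: Ht => //.
by rewrite mem_iota; lia.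
Qed.

Lemma strict_output_unique P A Q :
  is_config P -> strict_output P A -> output_config A Q -> Q = P.
Proof.
move=> cP sA [cQ oQ]; apply/ffunP => i.
have [/andP[P1 Pn] /andP[Q1 Qn]] := (cP i, cQ i).
have [eq_pred|ne] := eqVneq (Q i).-1 (P i).-1.
  by rewrite -(prednK Q1) -(prednK P1) eq_pred.
have vP : ((P i).-1 + i.+1 <= n)%N by lia.
have vQ : ((Q i).-1 + i.+1 <= n)%N by lia.
by have := le_lt_trans (oQ i _ vP) (sA i _ vQ ne); rewrite ltxx.
Qed.

Lemma unique_config_strict P A : (forall Q, output_config A Q <-> Q = P) ->
  is_config P /\ strict_output P A.
Proof.
move=> uA; have [cP oP] : output_config A P by apply/uA.
split => // i s sn ne; rewrite ltNge; apply/negP => le_s.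
pose Q : config n := [ffun j => if j == i then s.+1 else P j].
have oQ : output_config A Q.
  split=> j; rewrite /Q ffunE; case: eqP => [->|_].
  - by apply/andP; split => //; lia.
  - exact: cP.
  - by move=> s' s'n; apply: le_trans (oP i s' s'n) le_s.
  - exact: oP.
have /(congr1 (fun F : config n => F i)) := (uA Q).1 oQ.
by rewrite /Q ffunE eqxx => /= e; move: ne; rewrite -e eqxx.
Qed.

Lemma rf_eval_pnatE (f : ratfun R n) A k : (0 < k)%N -> rf_eval f A = k%:R ->
  f.2.@[A] != 0 /\ f.1.@[A] = k%:R * f.2.@[A].
Proof.
move=> k0 fA; have d0 : f.2.@[A] != 0.
  by apply: contra_eqN fA => /eqP d; rewrite /rf_eval d invr0 mulr0 eq_sym pnatr_eq0 -lt0n.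
by split=> //; rewrite -fA /rf_eval divfK.
Qed.

Lemma leaf_linepoly_eq T P B w i : solves_MCSP T ->
  is_config P -> strict_output P B -> generic_at (tree_polys T) B ->
  linepoly (reach T B i).1 B w = (P i)%:R *: linepoly (reach T B i).2 B w.
Proof.
move=> sol cP sB gB; apply/eqP; rewrite -subr_eq0; apply: contraT => neq0.
have [t [nz [path_t st]]] := near0p_ex (near0pI (near0p_poly_neq0 neq0)
  (near0pI (tree_path_near_line w gB) (@strict_output_line_open P B w sB))).
have [Q [oQ vQ]] := sol (line B w t).
have eQ := strict_output_unique cP st oQ; subst Q.
have [_] := rf_eval_pnatE (config_gt0 i cP) (vQ i).
rewrite (tree_path_reach path_t) => e.
by move: nz; rewrite hornerD hornerN hornerZ !linepolyE e subrr eqxx.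
Qed.

Lemma tree_path_config_inj T P Q BP BQ : solves_MCSP T ->
  is_config P -> strict_output P BP -> generic_at (tree_polys T) BP ->
  is_config Q -> strict_output Q BQ ->
  tree_path T BP = tree_path T BQ -> P = Q.
Proof.
move=> sol cP sP gP cQ sQ e; apply/ffunP => i.
have := congr1 (horner^~ 1) (leaf_linepoly_eq (fun j => BQ j - BP j) i sol cP sP gP).
rewrite hornerZ !linepolyE !(meval_eq _ (line1_sub BP BQ)) (tree_path_reach e) => eP.
have [Q' [oQ vQ]] := sol BQ.
have eQ := strict_output_unique cQ sQ oQ; subst Q'.
have [d0 eQ] := rf_eval_pnatE (config_gt0 i cQ) (vQ i).
by apply/eqP; rewrite -(eqr_nat R); apply/eqP/(mulIf d0); rewrite -eP -eQ.
Qed.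

End MaximumConsecutiveSums.

Theorem theorem2 (R : realType) (n : nat) (PP : seq (config n)) :
  (1 <= n)%N ->
  uniq PP ->
  (forall P, P \in PP -> @unique_config R n P) ->
  forall T : dtree R n, solves_MCSP T ->
    (up_log 3 (size PP) <= height T)%N.
Proof.
move=> _ uPP PP_unique T sol. (* the bound holds for n = 0 too *)
apply: up_log_min => //.
have witness P : exists B : input R n, P \in PP ->
    [/\ is_config P, strict_output P B & generic_at (tree_polys T) B].
  have [|_] := boolP (P \in PP); last by exists (fun _ => 0).
  move=> /PP_unique[A /unique_config_strict[cP sA]].
  have [B [sB gB]] := exists_generic (tree_polys T) (strict_output_line_open (P := P)) sA.
  by exists B.
have [pt ptP] := ClassicalEpsilon.choice _ witness.
apply: (size_leq_exp_height (pt := pt)) => // P Q /ptP[cP sP gP] /ptP[cQ sQ _].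
exact: tree_path_config_inj.
Qed.
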